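(* Let $\|\cdot\|$ be a norm on $\mathbb R^n$. Suppose $\Psi=\delta_C$ for a closed convex set $C\subseteq\mathbb R^n$, $x^\star\in C$ is a minimizer of $f$ over $C$, $\nu\in(0,1]$ and $p\ge2$. Suppose $\nabla f$ is $\nu$-Hölder continuous on $C$, i.e. there is $L>0$ with $\|\nabla f(x)-\nabla f(y)\|^*\le L\|x-y\|^\nu$ for all $x,y\in C$, and there is $\sigma>0$ such that $\langle\nabla f(x^\star),x-x^\star\rangle\ge\sigma\|x-x^\star\|^p$ for all $x\in C$. Then $(\mathcal D,\mathrm{gap})$ satisfies the $(q,r)$ local growth property with $q=1+\nu$ and $r=\frac{q(q-1)}{p(p-1)}$.
   Context: Let $f:\mathbb{R}^n\to\mathbb{R}\cup\{\infty\}$ be a closed proper convex function differentiable on $C$, and $\Psi=\delta_C$ the indicator function of $C$ (so $\arg\min_y\{\langle g,y\rangle+\Psi(y)\}=\arg\min_{y\in C}\langle g,y\rangle=\partial\Psi^*(-g)$). $f^*,\Psi^*$ denote conjugates; $\|\cdot\|^*$ is the dual norm. $D_f(y,x)=f(y)-f(x)-\langle\nabla f(x),y-x\rangle$. $\mathrm{gap}(x,u)=f(x)+\Psi(x)+f^*(u)+\Psi^*(-u)$. $\mathcal{D}(x,s,\theta)=D_f(x+\theta(s-x),x)+\Psi(x+\theta(s-x))-(1-\theta)\Psi(x)-\theta\Psi(s)$. $(q,r)$ local growth property ($q>1$, $r\in[0,1]$): there exist constants $\epsilon>0$ and $M>0$ such that for all $x\in\mathrm{dom}(\Psi)$, $g=\nabla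 f(x)$ and $s\in\partial\Psi^*(-g)$ with $\mathrm{gap}(x,g)<\epsilon$, one has $\mathcal D(x,s,\theta)\le\frac{M\theta^q}{q}\mathrm{gap}(x,g)^r$ for all $\theta\in[0,1]$. *)

From HB Require Import structures.
From mathcomp Require Import all_boot all_order all_algebra.
From mathcomp Require Import all_classical all_reals all_analysis.
Set Implicit Arguments. Unset Strict Implicit. Unset Printing Implicit Defensive.
Import Order.TTheory GRing.Theory Num.Theory.
Import numFieldNormedType.Exports.
Local Open Scope classical_set_scope.
Local Open Scope ring_scope.

Section Defs.
Variables (R : realType) (n : nat).
Notation V := 'rV[R]_n.

Definition inner (u v : V) : R := \sum_(i < n) u 0 i * v 0 i.

Definition is_norm (N : V -> R) : Prop :=
  [/\ forall x, 0 <= N x,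
      forall x, N x = 0 -> x = 0,
      forall (a : R) x, N (a *: x) = `|a| * N x
    & forall x y, N (x + y) <= N x + N y].

Definition dual_norm (N : V -> R) (g : V) : R :=
  sup [set inner g x | x in [set x | N x <= 1]].

Definition proper_fun (f : V -> \bar R) : Prop :=
  (exists x, f x < +oo)%E /\ (forall x, -oo < f x)%E.

Definition convex_fun (f : V -> \bar R) : Prop :=
  forall (x y : V) (t : R), 0 <= t <= 1 ->
    (f (t *: x + (1 - t) *: y)%R <= t%:E * f x + (1 - t)%:E * f y)%E.

(* closed = lower semicontinuous = all sublevel sets closed *)
Definition closed_fun (f : V -> \bar R) : Prop :=
  forall a : R, closed [set x | (f x <= a%:E)%E].

Definition differentiable_on (f : V -> \bar R) (C : set V) : Prop :=
  forall x, C x ->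
    (\forall y \near x, f y \is a fin_num) /\ differentiable (fine \o f) x.

Definition grad (f : V -> \bar R) (x : V) : V :=
  \row_(i < n) ('d (fine \o f) x (delta_mx 0 i : V)).

Definition delta_ind (C : set V) (y : V) : \bar R :=
  if `[< C y >] then 0%E else (+oo)%E.

Definition conj (h : V -> \bar R) (u : V) : \bar R :=
  ereal_sup [set ((inner u y)%:E - h y)%E | y in [set: V]].

Definition subdiff (h : V -> \bar R) (v : V) : set V :=
  [set s | h v \is a fin_num /\
           forall w, (h v + (inner s (w - v)%R)%:E <= h w)%E].

Definition bregman (f : V -> \bar R) (y x : V) : \bar R :=
  (f y - f x - (inner (grad f x) (y - x)%R)%:E)%E.

Definition gap (f Psi : V -> \bar R) (x u : V) : \bar R :=
  (f x + Psi x + conj f u + conj Psi (- u)%R)%E.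

Definition Dcal (f Psi : V -> \bar R) (x s : V) (th : R) : \bar R :=
  (bregman f (x + th *: (s - x))%R x + Psi (x + th *: (s - x))%R
   - (1 - th)%:E * Psi x - th%:E * Psi s)%E.

Definition local_growth (f Psi : V -> \bar R) (q r : R) : Prop :=
  1 < q /\ 0 <= r <= 1 /\
  exists eps M : R, 0 < eps /\ 0 < M /\
    forall x g s : V, Psi x \is a fin_num -> g = grad f x ->
      subdiff (conj Psi) (- g) s ->
      (gap f Psi x g < eps%:E)%E ->
      forall th : R, 0 <= th <= 1 ->
        (Dcal f Psi x s th <=
           ((M * th `^ q / q) * (fine (gap f Psi x g)) `^ r)%:E)%E.

End Defs.

From HB Require Import structures.
From mathcomp Require Import all_boot all_order all_algebra.
From mathcomp Require Import all_classical all_reals all_analysis.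
From mathcomp Require Import ring lra.
Set Implicit Arguments. Unset Strict Implicit. Unset Printing Implicit Defensive.
Import Order.TTheory GRing.Theory Num.Theory.
Import numFieldNormedType.Exports.
Local Open Scope classical_set_scope.
Local Open Scope ring_scope.

(* Write G for gap(x, grad f x) and s for a minimiser of <grad f x, .> over C.
   The gap dominates <grad f x, x - x*> >= f x - f x* >= <grad f x*, x - x*>,
   hence sigma |x - x*|^p <= G.  Optimality of s and Hoelder continuity give
   sigma |s - x*|^p <= <grad f x* - grad f x, s - x*> <= L |x - x*|^nu |s - x*|,
   so for G <= 1 both distances, and hence |s - x|, are bounded by
   K G^(nu / (p (p - 1))).  Finally Hoelder continuity bounds the Bregman
   divergence, D_f(y, x) <= L |y - x|^(1 + nu); with y = x + th (s - x) this
   yields D(x, s, th) <= L K^q th^q G^r for q = 1 + nu, r = q nu / (p (p - 1)).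
   When s is not in C, D(x, s, th) is -oo for th > 0.  Equivalence of norms
   on R^n makes the dual norm a genuine supremum, so <u, v> <= |u|_* |v|. *)

Section RowVectors.
Variables (R : realType) (n : nat).
Implicit Types u v w : 'rV[R]_n.

Lemma innerC u v : inner u v = inner v u.
Proof. by apply: eq_bigr => i _; rewrite mulrC. Qed.

Lemma innerDr u v w : inner u (v + w) = inner u v + inner u w.
Proof. by rewrite /inner -big_split; apply: eq_bigr => i _; rewrite mxE mulrDr. Qed.

Lemma innerZr u v a : inner u (a *: v) = a * inner u v.
Proof. by rewrite /inner mulr_sumr; apply: eq_bigr => i _; rewrite mxE mulrCA. Qed.

Lemma innerNr u v : inner u (- v) = - inner u v.
Proof. by rewrite -scaleN1r innerZr mulN1r. Qed.

Lemma innerBr u v w : inner u (v - w) = inner u v - inner u w.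
Proof. by rewrite innerDr innerNr. Qed.

Lemma innerBl u v w : inner (v - w) u = inner v u - inner w u.
Proof. by rewrite innerC innerBr !(innerC u). Qed.

Lemma inner0r u : inner u 0 = 0.
Proof. by rewrite -(scale0r (0 : 'rV_n)) innerZr mul0r. Qed.

Lemma row_entry_le_norm u i : `|u 0 i| <= `|u|.
Proof.
have -> : `|u| = mx_norm u by [].
by rewrite mx_normrE; apply/bigmax_geP; right; exists (0, i).
Qed.

End RowVectors.

Section NormOnRowVectors.
Variables (R : realType) (n : nat) (N : 'rV[R]_n -> R).
Hypothesis HN : is_norm N.
Implicit Types x y u v : 'rV[R]_n.

Lemma N_ge0 x : 0 <= N x.
Proof. by case: HN => + _ _ _; apply. Qed.

Lemma N_eq0 x : N x = 0 -> x = 0.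
Proof. by case: HN => _ + _ _; apply. Qed.

Lemma N_scale a x : N (a *: x) = `|a| * N x.
Proof. by case: HN => _ _ + _; apply. Qed.

Lemma N_triangle x y : N (x + y) <= N x + N y.
Proof. by case: HN => _ _ _; apply. Qed.

Lemma N_0 : N 0 = 0.
Proof. by rewrite -(scale0r (0 : 'rV_n)) N_scale normr0 mul0r. Qed.

Lemma N_opp x : N (- x) = N x.
Proof. by rewrite -scaleN1r N_scale normrN normr1 mul1r. Qed.

Lemma N_distC x y : N (x - y) = N (y - x).
Proof. by rewrite -N_opp opprB. Qed.

Lemma N_sub_triangle x y z : N (x - z) <= N (x - y) + N (y - z).
Proof. by have := N_triangle (x - y) (y - z); rewrite addrA subrK. Qed.

Lemma N_dist_ge x y : `|N x - N y| <= N (x - y).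
Proof.
have hx := N_sub_triangle x y 0; have hy := N_sub_triangle y x 0.
rewrite !subr0 in hx hy; rewrite N_distC in hy.
by rewrite ler_norml; apply/andP; split; lra.
Qed.

Lemma N_le_sup_norm x : N x <= `|x| * \sum_(i < n) N (delta_mx 0 i).
Proof.
rewrite {1}(row_sum_delta x) mulr_sumr.
elim/big_rec2: _ => [|i a b _ IH]; first by rewrite N_0.
apply: le_trans (N_triangle _ _) _; apply: lerD IH.
by rewrite N_scale ler_wpM2r ?N_ge0 ?row_entry_le_norm.
Qed.

Lemma N_continuous : continuous N.
Proof.
set K := \sum_(i < n) N (delta_mx 0 i).
have K0 : 0 <= K by apply: sumr_ge0 => i _; apply: N_ge0.
have K1 : 0 < K + 1 by lra.
move=> x; apply/(@cvgrPdist_lt _ _ _ _ (nbhs_filter x)) => e e0; near=> y.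
apply: le_lt_trans (N_dist_ge x y) _; apply: le_lt_trans (N_le_sup_norm _) _.
have : `|x - y| < e / (K + 1).
  by near: y; apply: (@cvgr_dist_lt _ _ _ _ (nbhs_filter x) id x cvg_id); rewrite divr_gt0.
rewrite ltr_pdivlMr // => h; apply: le_lt_trans h.
by rewrite ler_wpM2l // lerDl.
Unshelve. all: by end_near. Qed.

Lemma sup_norm_le_N : exists2 c, 0 < c & forall x, `|x| <= c * N x.
Proof.
pose S := [set x : 'rV[R]_n | `|x| = 1].
have unitS x : x != 0 -> S (`|x|^-1 *: x).
  by move=> x0; rewrite /S /= normrZ ger0_norm ?invr_ge0 // mulVf ?normr_eq0.
have [[m Sm]|S0] := pselect (S !=set0); last first.
  exists 1 => // x; have [->|x0] := eqVneq x 0; first by rewrite normr0 N_0 mulr0.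
  by case: S0; exists (`|x|^-1 *: x); apply: unitS.
have cS : compact S.
  apply: bounded_closed_compact; first by exists 1; split=> // M M1 x /= ->; apply: ltW.
  have -> : S = (fun x => `|x|) @^-1` [set 1] by [].
  by apply: closed_comp; [move=> x _; apply: norm_continuous | apply: closed_eq].
have [c Sc cmin] := compact_EVT_min (ex_intro _ m Sm) cS (continuous_subspaceT N_continuous).
have Nc0 : 0 < N c.
  rewrite lt_neqAle N_ge0 andbT; apply/eqP => /esym/N_eq0 c0.
  by move: Sc; rewrite inE /S /= c0 normr0 => /eqP; rewrite eq_sym oner_eq0.
exists (N c)^-1; first by rewrite invr_gt0.
move=> x; have [->|x0] := eqVneq x 0; first by rewrite normr0 N_0 mulr0.
have := cmin _ (mem_set (unitS x x0)).
rewrite N_scale ger0_norm ?invr_ge0 // ler_pdivlMl ?normr_gt0 //.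
by rewrite mulrC ler_pdivlMl.
Qed.

Lemma inner_le_dual_norm u v : inner u v <= dual_norm N u * N v.
Proof.
have [c c0 hc] := sup_norm_le_N.
pose S := [set inner u x | x in [set x | N x <= 1]].
have supS : has_sup S.
  split; first by exists (inner u 0), 0; rewrite /= ?N_0.
  exists (\sum_i `|u 0 i| * c) => _ [x /= Nx <-]; apply: ler_sum => i _.
  apply: le_trans (ler_norm _) _; rewrite normrM ler_wpM2l //.
  apply: le_trans (le_trans (row_entry_le_norm x i) (hc x)) _.
  by rewrite ler_piMr // ltW.
have [/N_eq0 ->|Nv0] := eqVneq (N v) 0; first by rewrite inner0r N_0 mulr0.
have Nvp : 0 < N v by rewrite lt_neqAle eq_sym Nv0 N_ge0.
have : inner u ((N v)^-1 *: v) <= dual_norm N u.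
  apply: sup_upper_bound => //; exists ((N v)^-1 *: v) => //=.
  by rewrite N_scale ger0_norm ?invr_ge0 ?N_ge0 // mulVf.
by rewrite innerZr ler_pdivrMl // mulrC.
Qed.

End NormOnRowVectors.

Section FirstOrderConvexity.
Variables (R : realType) (n : nat) (f : 'rV[R]_n -> \bar R).
Hypothesis fcvx : convex_fun f.

Lemma diff_grad x v : 'd (fine \o f) x v = inner (grad f x) v.
Proof.
rewrite {1}(row_sum_delta v) linear_sum /inner; apply: eq_bigr => i _.
by rewrite linearZ mxE /= mulrC.
Qed.

Lemma convex_slope_le x y fy t :
  f x \is a fin_num -> f y = fy%:E -> 0 < t <= 1 ->
  f (t *: (y - x) + x) \is a fin_num ->
  (fine (f (t *: (y - x) + x)) - fine (f x)) / t <= fy - fine (f x).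
Proof.
move=> fx_fin fyE /andP[t0 t1] ft_fin.
have := fcvx y x (t := t); rewrite (ltW t0) t1 => /(_ isT).
have -> : t *: y + (1 - t) *: x = t *: (y - x) + x.
  by rewrite scalerBr scalerBl scale1r [x - _]addrC addrA.
rewrite fyE -(fineK fx_fin) -(fineK ft_fin) -!EFinM -EFinD lee_fin => H.
by rewrite ler_pdivrMr //; nra.
Qed.

Lemma convex_grad_le (C : set 'rV[R]_n) x y :
  proper_fun f -> differentiable_on f C -> C x ->
  (f x + (inner (grad f x) (y - x))%:E <= f y)%E.
Proof.
move=> [_ fNy] df Cx; have [near_fin dfx] := df x Cx.
have fx_fin : f x \is a fin_num := nbhs_singleton near_fin.
case fyE: (f y) => [fy| |]; [|by rewrite leey|by have := fNy y; rewrite fyE].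
rewrite -(fineK fx_fin) -EFinD lee_fin -diff_grad -deriveE //.
suff : derive (fine \o f) x (y - x) <= fy - fine (f x) by lra.
have dv := diff_derivable (v := y - x) dfx.
rewrite /derive (cvg_at_rightE _ _ dv).
have to_x : (fun t : R => t *: (y - x) + x) @ 0^'+ --> x.
  apply: cvg_at_right_filter; rewrite -[X in _ --> X]add0r -(scale0r (y - x)).
  by apply: cvgD; [apply: cvgZl; apply: cvg_id | apply: cvg_cst].
apply: limr_le.
  by move: dv => /cvg_ex[l dl]; apply/cvg_ex; exists l; exact: cvg_dnbhs_at_right dl.
near=> t; rewrite /= [X in X <= _]mulrC; apply: convex_slope_le => //.
- by apply/andP; split; near: t; [apply: nbhs_right_gt | apply: nbhs_right_le].
- by near: t; apply: to_x _ near_fin.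
Unshelve. all: by end_near. Qed.

End FirstOrderConvexity.

Lemma differentiable_on_fin_num (R : realType) n (f : 'rV[R]_n -> \bar R) C x :
  differentiable_on f C -> C x -> f x \is a fin_num.
Proof. by move=> df /df[/nbhs_singleton]. Qed.

Section GrowthBounds.
Variable R : realType.
Implicit Types s L nu p a b G x y r : R.

Lemma powR_le_base r x y : 0 <= r -> 0 <= x -> x <= y -> x `^ r <= y `^ r.
Proof. by move=> r0 x0 xy; apply: ge0_ler_powR; rewrite ?nnegrE ?(le_trans x0 xy). Qed.

Lemma powR_ge_exp G x y : 0 <= G <= 1 -> 0 < y <= x -> G `^ x <= G `^ y.
Proof.
move=> /andP[G0 G1] /andP[y0 yx]; have [->|Gn0] := eqVneq G 0.
  by rewrite !powR0 // gt_eqF // (lt_le_trans y0 yx).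
by apply: ger_powR => //; rewrite G1 andbT lt_neqAle eq_sym Gn0.
Qed.

Lemma powRK p a : 0 <= a -> p != 0 -> (a `^ p) `^ p^-1 = a.
Proof. by move=> a0 p0; rewrite -powRrM mulfV // powRr1. Qed.

Lemma growth_root_le s p a G :
  0 < s -> 0 < p -> 0 <= a -> s * a `^ p <= G -> a <= s^-1 `^ p^-1 * G `^ p^-1.
Proof.
move=> s0 p0 a0 Ha; rewrite -powRM ?invr_ge0 ?(ltW s0) ?(le_trans _ Ha) //.
  rewrite -{1}(powRK a0 (lt0r_neq0 p0)); apply: powR_le_base; rewrite ?powR_ge0 //.
    by rewrite invr_ge0 ltW.
  by rewrite mulrC ler_pdivlMr // mulrC.
by rewrite mulr_ge0 ?powR_ge0 // ltW.
Qed.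

Lemma growth_holder_root_le s L nu p a b :
  0 < s -> 0 <= L -> 1 < p -> 0 <= a -> 0 <= b ->
  s * b `^ p <= L * a `^ nu * b -> b <= (L / s) `^ (p - 1)^-1 * a `^ (nu / (p - 1)).
Proof.
move=> s0 L0 p1 a0 b0 Hb; have p10 : 0 < p - 1 by lra.
have [->|bn0] := eqVneq b 0; first by rewrite mulr_ge0 ?powR_ge0.
have bp : 0 < b by rewrite lt_neqAle eq_sym bn0 b0.
have Hb1 : b `^ (p - 1) <= L / s * a `^ nu.
  rewrite mulrAC ler_pdivlMr // mulrC -(ler_pM2r bp) -mulrA.
  by rewrite [_ * b]mulrC mulr_powRB1 //; lra.
rewrite mulrC powRrM -powRM ?powR_ge0 ?divr_ge0 ?(ltW s0) //.
rewrite -{1}(powRK b0 (lt0r_neq0 p10)) mulrC.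
by apply: powR_le_base; rewrite ?invr_ge0 ?(ltW p10) ?powR_ge0.
Qed.

Definition growth_exponent nu p := p^-1 * (nu / (p - 1)).

Definition growth_constant s L nu p :=
  s^-1 `^ p^-1 + (L / s) `^ (p - 1)^-1 * (s^-1 `^ p^-1) `^ (nu / (p - 1)).

Lemma growth_constant_gt0 s L nu p : 0 < s -> 0 < growth_constant s L nu p.
Proof.
move=> s0; have c0 : 0 < s^-1 `^ p^-1 by rewrite powR_gt0 ?invr_gt0.
by apply: (lt_le_trans c0); rewrite lerDl mulr_ge0 ?powR_ge0.
Qed.

Lemma growth_exponent_mul_ge0_le1 nu p : 0 < nu <= 1 -> 2 <= p ->
  0 <= growth_exponent nu p * (1 + nu) <= 1.
Proof.
move=> /andP[nu0 nu1] p2.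
have -> : growth_exponent nu p * (1 + nu) = (1 + nu) * nu / (p * (p - 1)).
  by rewrite /growth_exponent; field; rewrite !gt_eqF //; lra.
apply/andP; split; first by rewrite divr_ge0 ?mulr_ge0 //; lra.
by rewrite ler_pdivrMr ?mul1r ?mulr_gt0 //; nra.
Qed.

Lemma growth_sum_le s L nu p a b G :
  0 < s -> 0 < L -> 0 < nu <= 1 -> 2 <= p ->
  0 <= a -> 0 <= b -> 0 <= G <= 1 ->
  s * a `^ p <= G -> s * b `^ p <= L * a `^ nu * b ->
  a + b <= growth_constant s L nu p * G `^ growth_exponent nu p.
Proof.
move=> s0 L0 /andP[nu0 nu1] p2 a0 b0 G01 Ha Hb.
have p0 : 0 < p by lra.
have p10 : 0 < p - 1 by lra.
have e0 : 0 < growth_exponent nu p by rewrite mulr_gt0 ?invr_gt0 ?divr_gt0.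
have ep : growth_exponent nu p <= p^-1.
  by rewrite ler_piMr ?invr_ge0 ?(ltW p0) // ler_pdivrMr //; lra.
have Ga := growth_root_le s0 p0 a0 Ha.
rewrite mulrDl; apply: lerD.
  apply: le_trans Ga _; rewrite ler_wpM2l ?powR_ge0 //.
  by apply: powR_ge_exp; rewrite ?e0.
apply: le_trans (growth_holder_root_le s0 (ltW L0) _ a0 b0 Hb) _; first lra.
rewrite -mulrA ler_wpM2l ?powR_ge0 //.
apply: le_trans (powR_le_base _ a0 Ga) _; first by rewrite divr_ge0 ?ltW.
by rewrite powRM ?powR_ge0 // ler_wpM2l ?powR_ge0 // -powRrM.
Qed.

End GrowthBounds.

Section IndicatorFunction.
Variables (R : realType) (n : nat) (C : set 'rV[R]_n).
Implicit Types (f h : 'rV[R]_n -> \bar R) (u g s x y : 'rV[R]_n).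

Lemma delta_ind_in y : C y -> delta_ind C y = 0%E.
Proof. by move=> Cy; rewrite /delta_ind asboolT. Qed.

Lemma delta_ind_notin y : ~ C y -> delta_ind C y = +oo%E.
Proof. by move=> Cy; rewrite /delta_ind asboolF. Qed.

Lemma delta_ind_fin_num y : delta_ind C y \is a fin_num -> C y.
Proof. by rewrite /delta_ind; case: asboolP. Qed.

Lemma conj_ge_inner h u y : ((inner u y)%:E - h y <= conj h u)%E.
Proof. by apply: ereal_sup_ubound; exists y. Qed.

Lemma conj_delta_ind_ge y u : C y -> ((inner u y)%:E <= conj (delta_ind C) u)%E.
Proof. by move=> Cy; have := conj_ge_inner (delta_ind C) u y; rewrite delta_ind_in ?sube0. Qed.

Lemma conj_delta_ind0_le0 : (conj (delta_ind C) 0 <= 0)%E.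
Proof.
apply: ge_ereal_sup => _ [y _ <-]; rewrite innerC inner0r.
have [Cy|nCy] := pselect (C y); first by rewrite delta_ind_in // sube0.
by rewrite delta_ind_notin // leNye.
Qed.

Lemma subdiff_conj_delta_ind_le g s y :
  C y -> subdiff (conj (delta_ind C)) (- g) s -> inner g (s - y) <= 0.
Proof.
move=> Cy [_ /(_ 0)]; rewrite sub0r opprK => Hs.
have := le_trans (leeD (conj_delta_ind_ge (- g) Cy) (lexx _))
                 (le_trans Hs conj_delta_ind0_le0).
by rewrite -EFinD lee_fin innerBr (innerC s) (innerC (- g)) innerNr (innerC y); lra.
Qed.

Lemma gap_delta_ind_ge f g x y : C x -> C y -> f x \is a fin_num ->
  ((inner g (x - y))%:E <= gap f (delta_ind C) x g)%E.
Proof.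
move=> Cx Cy fx_fin; rewrite /gap delta_ind_in // adde0.
have := leeD (leeD (lexx (f x)) (conj_ge_inner f g x)) (conj_delta_ind_ge (- g) Cy).
apply: le_trans; rewrite -(fineK fx_fin) -!EFinB -!EFinD lee_fin.
by rewrite innerBr (innerC (- g)) innerNr (innerC y); lra.
Qed.

Lemma Dcal_delta_ind_notin f x s th : C x -> f x \is a fin_num -> ~ C s ->
  0 <= th -> (Dcal f (delta_ind C) x s th <= 0)%E.
Proof.
move=> Cx fx_fin nCs; rewrite le_eqVlt => /predU1P[<-|th0].
  rewrite /Dcal scale0r addr0 delta_ind_in // /bregman subrr inner0r.
  by rewrite -(fineK fx_fin) -!EFinB subrr mul0e sube0.
by rewrite /Dcal [delta_ind C s]delta_ind_notin // gt0_muley ?lte_fin //= addeNy leNye.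
Qed.

Lemma convex_set_segment x s th : convex_set C -> C x -> C s -> 0 <= th <= 1 ->
  C (x + th *: (s - x)).
Proof.
move=> cC Cx Cs /andP[th0 th1].
have := cC s x (Itv01 th0 th1); rewrite !inE => /(_ Cs Cx).
suff -> : x + th *: (s - x) = th *: s + (1 - th) *: x by [].
by rewrite scalerBl scale1r scalerBr addrCA.
Qed.

Lemma Dcal_delta_ind_in f x s th : convex_set C -> C x -> C s -> 0 <= th <= 1 ->
  Dcal f (delta_ind C) x s th = bregman f (x + th *: (s - x)) x.
Proof.
move=> cC Cx Cs th01; have Cxth := convex_set_segment cC Cx Cs th01.
by rewrite /Dcal !delta_ind_in // !mule0 !sube0 adde0.
Qed.

End IndicatorFunction.

Section HolderGradient.
Variables (R : realType) (n : nat) (N : 'rV[R]_n -> R) (f : 'rV[R]_n -> \bar R).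
Variables (C : set 'rV[R]_n) (L nu : R).
Hypotheses (HN : is_norm N) (fprop : proper_fun f) (fcvx : convex_fun f).
Hypotheses (fdiff : differentiable_on f C) (nu0 : 0 < nu).
Hypothesis holder : forall x y, C x -> C y ->
  dual_norm N (grad f x - grad f y) <= L * N (x - y) `^ nu.

Lemma inner_grad_sub_le x y : C x -> C y ->
  inner (grad f x - grad f y) (x - y) <= L * N (x - y) `^ (1 + nu).
Proof.
move=> Cx Cy; apply: le_trans (inner_le_dual_norm HN _ _) _.
have -> : N (x - y) `^ (1 + nu) = N (x - y) `^ nu * N (x - y).
  by rewrite [1 + nu]addrC powRD ?powRr1 ?(N_ge0 HN) // gt_eqF // addr_gt0.
by rewrite mulrA ler_wpM2r ?(N_ge0 HN) ?holder.
Qed.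

Lemma bregman_le_holder x y : C x -> C y ->
  (bregman f y x <= (L * N (y - x) `^ (1 + nu))%:E)%E.
Proof.
move=> Cx Cy; have := inner_grad_sub_le Cy Cx.
have := @convex_grad_le _ _ f fcvx C y x fprop fdiff Cy.
rewrite /bregman -(fineK (differentiable_on_fin_num fdiff Cx)).
rewrite -(fineK (differentiable_on_fin_num fdiff Cy)) -!EFinB -EFinD !lee_fin.
(* Abstracting the gradients keeps the rewrites below from unfolding [grad]. *)
move: (grad f x) (grad f y) => gx gy.
rewrite -[x - y]opprB innerNr innerBl; lra.
Qed.

End HolderGradient.

Section LocalGrowth.
Variables (R : realType) (n : nat) (N : 'rV[R]_n -> R) (f : 'rV[R]_n -> \bar R).
Variables (C : set 'rV[R]_n) (xstar : 'rV[R]_n) (L sigma nu p : R).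
Hypotheses (HN : is_norm N) (fprop : proper_fun f) (fcvx : convex_fun f).
Hypotheses (fdiff : differentiable_on f C) (Cxstar : C xstar) (Ccvx : convex_set C).
Hypotheses (L0 : 0 < L) (sigma0 : 0 < sigma) (nu01 : 0 < nu <= 1) (p2 : 2 <= p).
Hypothesis holder : forall x y, C x -> C y ->
  dual_norm N (grad f x - grad f y) <= L * N (x - y) `^ nu.
Hypothesis growth : forall x, C x ->
  sigma * N (x - xstar) `^ p <= inner (grad f xstar) (x - xstar).

Lemma growth_le_gap x : C x ->
  ((sigma * N (x - xstar) `^ p)%:E <= gap f (delta_ind C) x (grad f x))%E.
Proof.
move=> Cx; have fx_fin := differentiable_on_fin_num fdiff Cx.
apply: le_trans (gap_delta_ind_ge (grad f x) Cx Cxstar fx_fin); rewrite lee_fin.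
have := growth Cx; have := @convex_grad_le _ _ f fcvx C x xstar fprop fdiff Cx.
have := @convex_grad_le _ _ f fcvx C xstar x fprop fdiff Cxstar.
rewrite -(fineK fx_fin) -(fineK (differentiable_on_fin_num fdiff Cxstar)).
rewrite -!EFinD !lee_fin; move: (grad f x) (grad f xstar) => gx gs.
rewrite -[xstar - x]opprB innerNr; lra.
Qed.

Lemma argmin_growth_le x s : C x -> C s ->
  subdiff (conj (delta_ind C)) (- grad f x) s ->
  sigma * N (s - xstar) `^ p <= L * N (x - xstar) `^ nu * N (s - xstar).
Proof.
move=> Cx Cs sub; apply: le_trans (growth Cs) _.
have := subdiff_conj_delta_ind_le Cxstar sub.
have := le_trans (inner_le_dual_norm HN _ _)
                 (ler_wpM2r (N_ge0 HN (s - xstar)) (holder Cxstar Cx)).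
rewrite (N_distC HN xstar); move: (grad f x) (grad f xstar) => gx gs.
rewrite innerBl; lra.
Qed.

Lemma Dcal_le_gap x s th G : C x -> C s ->
  subdiff (conj (delta_ind C)) (- grad f x) s ->
  gap f (delta_ind C) x (grad f x) = G%:E -> G <= 1 -> 0 <= th <= 1 ->
  (Dcal f (delta_ind C) x s th <=
   (L * (th * (growth_constant sigma L nu p * G `^ growth_exponent nu p)) `^ (1 + nu))%:E)%E.
Proof.
move=> Cx Cs sub gapE G1 th01; have /andP[nu0 _] := nu01.
have Ggrowth := growth_le_gap Cx; rewrite gapE lee_fin in Ggrowth.
have G0 : 0 <= G by apply: le_trans Ggrowth; rewrite mulr_ge0 ?powR_ge0 ?ltW.
have dist : N (s - x) <= growth_constant sigma L nu p * G `^ growth_exponent nu p.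
  apply: le_trans (N_sub_triangle HN s xstar x) _; rewrite (N_distC HN xstar) addrC.
  apply: growth_sum_le; rewrite ?(N_ge0 HN) ?G0 ?G1 //.
  exact: argmin_growth_le.
have Cxth := convex_set_segment Ccvx Cx Cs th01.
rewrite Dcal_delta_ind_in //.
apply: le_trans (bregman_le_holder HN fprop fcvx fdiff nu0 holder Cx Cxth) _.
have /andP[th0 _] := th01.
rewrite lee_fin addrAC subrr add0r (N_scale HN) ger0_norm // ler_wpM2l ?(ltW L0) //.
by apply: powR_le_base; rewrite ?addr_ge0 ?(ltW nu0) ?mulr_ge0 ?(N_ge0 HN) ?ler_wpM2l.
Qed.

Theorem local_growth_delta_ind :
  local_growth f (delta_ind C) (1 + nu) (growth_exponent nu p * (1 + nu)).
Proof.
have /andP[nu0 _] := nu01.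
set K := growth_constant sigma L nu p; set e := growth_exponent nu p.
have K0 : 0 < K by apply: growth_constant_gt0.
split; first lra; split; first exact: growth_exponent_mul_ge0_le1.
exists 1, (L * K `^ (1 + nu) * (1 + nu)); split; first exact: ltr01.
split; first by rewrite !mulr_gt0 ?powR_gt0 // addr_gt0.
move=> x _ s /delta_ind_fin_num Cx -> sub gap_lt1 th th01.
have gap_ge := growth_le_gap Cx.
have gap_ge0 : (0 <= gap f (delta_ind C) x (grad f x))%E.
  by apply: le_trans gap_ge; rewrite lee_fin mulr_ge0 ?powR_ge0 ?ltW.
have gap_fin : gap f (delta_ind C) x (grad f x) \is a fin_num.
  by rewrite ge0_fin_numE // (lt_trans gap_lt1) ?ltey.
have gapE := fineK gap_fin; set G := fine _ in gapE *.
have G1 : G <= 1 by rewrite -lee_fin gapE ltW.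
have [Cs|nCs] := pselect (C s); last first.
  have /andP[th0 _] := th01.
  apply: le_trans (Dcal_delta_ind_notin Cx (differentiable_on_fin_num fdiff Cx) nCs th0) _.
  by rewrite lee_fin !mulr_ge0 ?powR_ge0 ?invr_ge0 ?addr_ge0 ?(ltW L0) ?(ltW nu0).
apply: le_trans (Dcal_le_gap Cx Cs sub (esym gapE) G1 th01) _.
have /andP[th0 _] := th01; rewrite -/K -/e lee_fin le_eqVlt; apply/orP; left.
rewrite !powRM ?mulr_ge0 ?powR_ge0 ?(ltW K0) // -powRrM; apply/eqP.
by field; rewrite gt_eqF // addr_gt0.
Qed.

End LocalGrowth.

Theorem proposition6 (R : realType) (n : nat) (N : 'rV[R]_n -> R)
  (f : 'rV[R]_n -> \bar R) (C : set 'rV[R]_n) (xstar : 'rV[R]_n)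
  (nu p L sigma : R) :
  is_norm N ->
  closed C -> convex_set C ->
  closed_fun f -> proper_fun f -> convex_fun f -> differentiable_on f C ->
  C xstar -> (forall x, C x -> (f xstar <= f x)%E) ->
  0 < nu <= 1 -> 2 <= p ->
  0 < L ->
  (forall x y, C x -> C y ->
     dual_norm N (grad f x - grad f y) <= L * N (x - y) `^ nu) ->
  0 < sigma ->
  (forall x, C x -> sigma * N (x - xstar) `^ p <= inner (grad f xstar) (x - xstar)) ->
  local_growth f (delta_ind C) (1 + nu)
    ((1 + nu) * ((1 + nu) - 1) / (p * (p - 1))).
Proof.
move=> HN _ Ccvx _ fprop fcvx fdiff Cxstar _ nu01 p2 L0 holder sigma0 growth.
have -> : (1 + nu) * (1 + nu - 1) / (p * (p - 1)) = growth_exponent nu p * (1 + nu).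
  by rewrite /growth_exponent; field; rewrite !gt_eqF //; lra.
exact: (local_growth_delta_ind HN fprop fcvx fdiff Cxstar Ccvx L0 sigma0 nu01 p2
          holder growth).
Qed.
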